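(* Let $\langle L,\leq\rangle$, $\langle K,\leq\rangle$ be complete lattices and $f:L\to K$ a surjective lattice morphism. Let $O:L\to L$ be an operator and $A:L^2\to L^2$ an approximator of $O$ such that both $O$ and $A$ respect $f$, and let $A_f$ be the projection of $A$ on $K$. If $(x',y')$ is an $A$-refinement of $(x,y)$, then $(f(x'),f(y'))$ is an $A_f$-refinement of $(f(x),f(y))$.
   Context: A lattice morphism satisfies $f(\bigvee X)=\bigvee f(X)$, $f(\bigwedge X)=\bigwedge f(X)$ for all $X\subseteq L$. $L^2$ has precision order $(x,y)\leq_p(u,v)$ iff $x\leq u,v\leq y$; $(x,y)_1=x,(x,y)_2=y$. An approximator of $O$ is a $\leq_p$-monotone $A$ with $A(x,x)_1\leq O(x)\leq A(x,x)_2$, assumed symmetric ($A(x,y)_1=A(y,x)_2$). $O$ respects $f$ if $f(x)=f(y)$ implies $f(O(x))=f(O(y))$. With $f^2(x,y)=(f(x),f(y))$, $A$ respects $f$ if $f^2(p)=f^2(q)$ implies $f^2(A(p))=f^2(A(q))$; $A_f$ is the unique operator on $K^2$ with $A_f\circ f^2=f^2\circ A$. For an operator $B$ on a bilattice $M^2$, a $B$-refinement of $(x,y)$ is a pair $(x',y')$ with either $(x,y)\leq_p(x',y')\leq_p B(x,y)$, or $x'=x$ and $B(x,y')_2\leq y'\leq y$. *)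

Set Implicit Arguments.

Record CompleteLattice := {
  carrier :> Type;
  le : carrier -> carrier -> Prop;
  sup : (carrier -> Prop) -> carrier;
  inf : (carrier -> Prop) -> carrier;
  le_refl : forall x, le x x;
  le_trans : forall x y z, le x y -> le y z -> le x z;
  le_antisym : forall x y, le x y -> le y x -> x = y;
  sup_ub : forall (X : carrier -> Prop) x, X x -> le x (sup X);
  sup_least : forall (X : carrier -> Prop) z,
      (forall x, X x -> le x z) -> le (sup X) z;
  inf_lb : forall (X : carrier -> Prop) x, X x -> le (inf X) x;
  inf_greatest : forall (X : carrier -> Prop) z,
      (forall x, X x -> le z x) -> le z (inf X)
}.

Arguments le {c} _ _.
Arguments sup {c} _.
Arguments inf {c} _.

Definition image {A B : Type} (f : A -> B) (X : A -> Prop) : B -> Prop :=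
  fun b => exists a, X a /\ f a = b.

Definition lattice_morphism {L K : CompleteLattice} (f : L -> K) : Prop :=
  forall X : L -> Prop, f (sup X) = sup (image f X) /\ f (inf X) = inf (image f X).

Definition surjective {A B : Type} (f : A -> B) : Prop :=
  forall b, exists a, f a = b.

Definition le_p {L : CompleteLattice} (p q : L * L) : Prop :=
  le (fst p) (fst q) /\ le (snd q) (snd p).

Definition f2 {L K : Type} (f : L -> K) (p : L * L) : K * K := (f (fst p), f (snd p)).

Definition approximator {L : CompleteLattice} (O : L -> L) (A : L * L -> L * L) : Prop :=
  (forall p q, le_p p q -> le_p (A p) (A q)) /\
  (forall x, le (fst (A (x, x))) (O x) /\ le (O x) (snd (A (x, x)))) /\
  (forall x y, fst (A (x, y)) = snd (A (y, x))).

Definition op_respects {L K : Type} (f : L -> K) (O : L -> L) : Prop :=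
  forall x y, f x = f y -> f (O x) = f (O y).

Definition approx_respects {L K : Type} (f : L -> K) (A : L * L -> L * L) : Prop :=
  forall p q, f2 f p = f2 f q -> f2 f (A p) = f2 f (A q).

(* Af is the projection of A on K: Af o f^2 = f^2 o A (unique when f is
   surjective) *)
Definition projection_of {L K : Type} (f : L -> K) (A : L * L -> L * L)
  (Af : K * K -> K * K) : Prop :=
  forall p, Af (f2 f p) = f2 f (A p).

Definition refinement {M : CompleteLattice} (B : M * M -> M * M) (xy xy' : M * M) : Prop :=
  (le_p xy xy' /\ le_p xy' (B xy)) \/
  (fst xy' = fst xy /\ le (snd (B (fst xy, snd xy'))) (snd xy') /\ le (snd xy') (snd xy)).


(* Only two facts are needed: a join-preserving map is monotone, and [Af]
   commutes with [f2 f].  Applying [f] to both chains of inequalities defining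
   an [A]-refinement then gives the chains defining an [Af]-refinement. *)

Lemma sup_pair_le {L : CompleteLattice} {a b : L} (Hab : le a b) :
  sup (fun z => z = a \/ z = b) = b.
Proof.
  apply le_antisym.
  - apply sup_least. intros z [-> | ->]; [exact Hab | apply le_refl].
  - apply sup_ub. right; reflexivity.
Qed.

Lemma sup_preserving_monotone {L K : CompleteLattice} {f : L -> K} :
  (forall X : L -> Prop, f (sup X) = sup (image f X)) ->
  forall a b : L, le a b -> le (f a) (f b).
Proof.
  intros Hsup a b Hab.
  rewrite <- (sup_pair_le Hab), Hsup.
  apply sup_ub. exists a. split; [left | ]; reflexivity.
Qed.

Lemma lattice_morphism_monotone {L K : CompleteLattice} {f : L -> K} :
  lattice_morphism f -> forall a b : L, le a b -> le (f a) (f b).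
Proof.
  intros Hmorph. apply sup_preserving_monotone.
  intros X. exact (proj1 (Hmorph X)).
Qed.

Lemma f2_monotone_le_p {L K : CompleteLattice} {f : L -> K} :
  (forall a b : L, le a b -> le (f a) (f b)) ->
  forall p q : L * L, le_p p q -> le_p (f2 f p) (f2 f q).
Proof.
  intros Hmono p q [H1 H2]. split; apply Hmono; assumption.
Qed.

Lemma refinement_f2 {L K : CompleteLattice} {f : L -> K}
  {A : L * L -> L * L} {Af : K * K -> K * K} :
  (forall a b : L, le a b -> le (f a) (f b)) ->
  projection_of f A Af ->
  forall p p' : L * L, refinement A p p' -> refinement Af (f2 f p) (f2 f p').
Proof.
  intros Hmono Hproj [x y] [x' y'].
  unfold refinement; simpl.
  intros [[Hle Hle'] | [Hx [HA Hy]]].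
  - left. rewrite Hproj.
    split; apply f2_monotone_le_p; assumption.
  - right. subst x'. simpl.
    change (f x, f y') with (f2 f (x, y')). rewrite Hproj.
    repeat split; apply Hmono; assumption.
Qed.

Theorem propositionA1 (L K : CompleteLattice) (f : L -> K)
  (Hsurj : surjective f) (Hmorph : lattice_morphism f)
  (O : L -> L) (A : L * L -> L * L)
  (Happrox : approximator O A)
  (HOf : op_respects f O) (HAf : approx_respects f A)
  (Af : K * K -> K * K) (HAfproj : projection_of f A Af)
  (x y x' y' : L) :
  refinement A (x, y) (x', y') ->
  refinement Af (f x, f y) (f x', f y').
Proof.
  exact (refinement_f2 (lattice_morphism_monotone Hmorph) HAfproj (x, y) (x', y')).
Qed.
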